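(* Let $M \subseteq \mathbb{N}_0$ be a semiideal. If $d$ is a difference of $M$, then there is an element $c \in M$ with $c \neq 0$ and $c$ divisible by $d$, such that $c + nd \in M$ for all $n \in \mathbb{N}_0$.
   Context: $\mathbb{N}_0$ denotes the semiring of natural numbers including $0$ with usual addition and multiplication. A semiideal of $\mathbb{N}_0$ is a nonempty subset $M \subseteq \mathbb{N}_0$ such that $m+m' \in M$ and $rm \in M$ for all $m,m' \in M$, $r \in \mathbb{N}_0$ (so $0 \in M$). For a semiideal $M \neq 0$, an element $d \in \mathbb{N} = \mathbb{N}_0\setminus\{0\}$ is called a difference of $M$ if there exist $a, b \in M$ with $a \neq 0$ and $a + d = b$. *)

From mathcomp Require Import all_boot.

Definition semiideal (M : nat -> Prop) : Prop :=
  (exists m, M m) /\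
  (forall m m', M m -> M m' -> M (m + m')) /\
  (forall r m, M m -> M (r * m)).

Definition difference (M : nat -> Prop) (d : nat) : Prop :=
  0 < d /\ exists a b, M a /\ M b /\ a <> 0 /\ a + d = b.

From mathcomp Require Import all_boot.
From mathcomp Require Import zify.

(* Take a difference a + d = b with a, b in M and a <> 0, and c := a^2 d.
   Dividing n by a, n = q a + r with r < a, gives
   c + n d = (a d - r + q d) a + r b, a combination of a and b with natural
   coefficients (r <= a d as d > 0), hence an element of M. *)

Lemma semiideal_lincomb (M : nat -> Prop) (x y a b : nat) :
  semiideal M -> M a -> M b -> M (x * a + y * b).
Proof. by move=> [_ [addM mulM]] Ma Mb; apply: addM; apply: mulM. Qed.

Lemma sqr_mul_addn_lincomb (n a d : nat) : 0 < a -> 0 < d ->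
  exists x y, a * a * d + n * d = x * a + y * (a + d).
Proof.
move=> a_gt0 d_gt0; exists (a * d - n %% a + n %/ a * d), (n %% a).
have n_div := divn_eq n a; have r_lt := ltn_pmod n a_gt0.
nia.
Qed.

Theorem theorem4p2 (M : nat -> Prop) (d : nat) :
  semiideal M -> (exists m, M m /\ m <> 0) -> difference M d ->
  exists c, M c /\ c <> 0 /\ d %| c /\ forall n : nat, M (c + n * d).
Proof.
(* The hypothesis M <> 0 is implied by [difference M d]. *)
move=> MI _ [d_gt0 [a [b [Ma [Mb [a_neq0 ab]]]]]].
have a_gt0 : 0 < a by rewrite lt0n; apply/eqP.
have shiftM n : M (a * a * d + n * d).
  have [x [y ->]] := sqr_mul_addn_lincomb n _ _ a_gt0 d_gt0.
  by rewrite ab; apply: semiideal_lincomb.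
exists (a * a * d); split; last split; [| nia | split] => //.
- by have := shiftM 0; rewrite addn0.
- exact: dvdn_mull.
Qed.
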